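(* Let $A=(a_{ij})_{i,j=1}^n$ be a real symmetric $n\times n$ matrix and $f(x)=x^\top A x$ for $x\in\mathbb{Z}^n$. Then $f$ is multimodular if and only if $$a_{ij}-a_{i,j+1}-a_{i+1,j}+a_{i+1,j+1}\le 0\qquad\text{for all } 0\le i<j\le n,$$ where by convention $a_{ij}=0$ whenever an index equals $0$ or $n+1$.
   Context: For $f:\mathbb{Z}^n\to\mathbb{R}\cup\{+\infty\}$, $\mathrm{dom}\, f=\{x\in\mathbb{Z}^n: f(x)<+\infty\}$. Let $e_i$ denote the $i$-th unit vector of $\mathbb{Z}^n$ and $\mathcal{F}=\{-e_1,\ e_1-e_2,\ e_2-e_3,\ \dots,\ e_{n-1}-e_n,\ e_n\}$. A function $f:\mathbb{Z}^n\to\mathbb{R}\cup\{+\infty\}$ is called multimodular if $\mathrm{dom}\, f\neq\emptyset$ and $f(z+d)+f(z+d')\ge f(z)+f(z+d+d')$ for all $z\in\mathrm{dom}\, f$ and all distinct $d,d'\in\mathcal{F}$ (with the usual conventions for $+\infty$). *)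

From HB Require Import structures.
From mathcomp Require Import all_boot all_order all_algebra.
Set Implicit Arguments. Unset Strict Implicit. Unset Printing Implicit Defensive.
Import Order.TTheory GRing.Theory Num.Theory.
Local Open Scope ring_scope.

(* Extended values R ∪ {+oo}: [Some r] is the finite value r, [None] is +oo. *)
Definition ext_add (R : realFieldType) (x y : option R) : option R :=
  match x, y with Some a, Some b => Some (a + b) | _, _ => None end.

Definition ext_ge (R : realFieldType) (x y : option R) : Prop :=
  match x, y with
  | None, _ => True
  | Some _, None => False
  | Some a, Some b => b <= a
  end.

(* Unit vector e_k, 1-based index k (1 <= k <= n). *)
Definition unitv (n k : nat) : 'cV[int]_n :=
  \col_(i < n) (if i.+1 == k then 1 else 0).

Definition inF (n : nat) (d : 'cV[int]_n) : Prop :=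
  d = - unitv n 1
  \/ (exists i : nat, (1 <= i)%N /\ (i < n)%N /\ d = unitv n i - unitv n i.+1)
  \/ d = unitv n n.

Definition dom (R : realFieldType) (n : nat) (f : 'cV[int]_n -> option R) :=
  fun x => f x <> None.

Definition multimodular (R : realFieldType) (n : nat)
    (f : 'cV[int]_n -> option R) : Prop :=
  (exists x, dom f x) /\
  forall (z d d' : 'cV[int]_n), dom f z -> inF d -> inF d' -> d <> d' ->
    ext_ge (ext_add (f (z + d)) (f (z + d'))) (ext_add (f z) (f (z + d + d'))).

Definition quadform (R : realFieldType) (n : nat) (A : 'M[R]_n)
    (x : 'cV[int]_n) : option R :=
  let xr := map_mx (fun z : int => z%:~R) x in
  Some ((xr^T *m A *m xr) ord0 ord0).

(* Entry a_{ij} with 1-based indices, and a_{ij} = 0 when an index is 0 or n+1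
   (more generally, outside 1..n). *)
Definition aext (R : realFieldType) (n : nat) (A : 'M[R]_n) (i j : nat) : R :=
  if [&& (1 <= i)%N & (1 <= j)%N] then
    match (insub i.-1 : option 'I_n), (insub j.-1 : option 'I_n) with
    | Some i', Some j' => A i' j'
    | _, _ => 0
    end
  else 0.

(* For the quadratic form q(x) = x^T A x with A symmetric, the second mixed
   difference q(z+d) + q(z+d') - q(z) - q(z+d+d') equals -2 d^T A d' and does
   not depend on z.  So q is multimodular iff d^T A d' <= 0 for all distinct
   d, d' in F.  Writing the elements of F as e_k - e_(k+1) for 0 <= k <= n
   (with e_0 = e_(n+1) = 0), the product (e_i - e_(i+1))^T A (e_j - e_(j+1))
   is exactly the second difference of the extended entries a_ij. *)

From HB Require Import structures.
From mathcomp Require Import all_boot all_order all_algebra.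
From mathcomp Require Import ring lra zify.
Import Order.TTheory GRing.Theory Num.Theory.
Set Implicit Arguments. Unset Strict Implicit. Unset Printing Implicit Defensive.
Local Open Scope ring_scope.

Section BilinearForm.
Variables (R : comPzRingType) (n : nat) (A : 'M[R]_n).

Definition bform (u v : 'cV[R]_n) : R := (u^T *m A *m v) 0 0.

Lemma bformDl u v w : bform (u + v) w = bform u w + bform v w.
Proof. by rewrite /bform linearD !mulmxDl mxE. Qed.

Lemma bformDr u v w : bform w (u + v) = bform w u + bform w v.
Proof. by rewrite /bform mulmxDr mxE. Qed.

Lemma bformBl u v w : bform (u - v) w = bform u w - bform v w.
Proof. by rewrite /bform (raddfB (@trmx R n 1)) /= !mulmxBl !mxE. Qed.

Lemma bformBr u v w : bform w (u - v) = bform w u - bform w v.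
Proof. by rewrite /bform mulmxBr !mxE. Qed.

Lemma bformC : A^T = A -> forall u v, bform u v = bform v u.
Proof.
move=> symA u v; rewrite /bform.
transitivity ((v^T *m A *m u)^T 0 0); last by rewrite mxE.
by rewrite !trmx_mul trmxK symA mulmxA.
Qed.

Lemma bform_delta (i j : 'I_n) : bform (delta_mx i 0) (delta_mx j 0) = A i j.
Proof. by rewrite /bform trmx_delta -rowE -colE !mxE. Qed.

Lemma bform_mixed_difference z d d' :
  bform (z + d) (z + d) + bform (z + d') (z + d') =
  bform z z + bform (z + d + d') (z + d + d') - (bform d d' + bform d' d).
Proof. rewrite !(bformDl, bformDr); ring. Qed.

End BilinearForm.

Section QuadraticForm.
Variables (R : realFieldType) (n : nat) (A : 'M[R]_n).
Hypothesis symA : A^T = A.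

Lemma quadformE x : quadform A x = Some (bform A (map_mx intr x) (map_mx intr x)).
Proof. by []. Qed.

Lemma quadform_mixed_difference_le0 z d d' :
  ext_ge (ext_add (quadform A (z + d)) (quadform A (z + d')))
         (ext_add (quadform A z) (quadform A (z + d + d'))) <->
  bform A (map_mx intr d) (map_mx intr d') <= 0.
Proof.
rewrite !quadformE /= !map_mxD bform_mixed_difference (bformC symA (map_mx _ d')).
by split => h; lra.
Qed.

End QuadraticForm.

Lemma unitv_out n k : (k == 0)%N || (n < k)%N -> unitv n k = 0.
Proof.
move=> k_out; apply/matrixP => i j; rewrite !mxE.
by case: eqP => // ik; have := ltn_ord i; lia.
Qed.

Lemma unitv_delta n (i : 'I_n) : unitv n i.+1 = delta_mx i 0.
Proof.
apply/matrixP => k j; rewrite !mxE (ord1 j) eqxx andbT eqSS val_eqE.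
by case: (k == i).
Qed.

Lemma aext_out (R : realFieldType) n (A : 'M[R]_n) k l :
  [|| (k == 0)%N, (n < k)%N, (l == 0)%N | (n < l)%N] -> aext A k l = 0.
Proof.
rewrite /aext; case: k => [|k]; case: l => [|l] //= kl_out.
case: insubP => [k' k_in _|] //=; case: insubP => [l' l_in _|] //=.
by move: kl_out; rewrite /= in k_in l_in; lia.
Qed.

Lemma bform_unitv (R : realFieldType) n (A : 'M[R]_n) k l :
  bform A (map_mx intr (unitv n k)) (map_mx intr (unitv n l)) = aext A k l.
Proof.
have [k_out|k_in] := boolP ((k == 0)%N || (n < k)%N).
  rewrite unitv_out // aext_out; last by rewrite orbA k_out.
  by rewrite map_mx0 /bform trmx0 !mul0mx mxE.
have [l_out|l_in] := boolP ((l == 0)%N || (n < l)%N).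
  rewrite (unitv_out l_out) aext_out; last by rewrite l_out !orbT.
  by rewrite map_mx0 /bform mulmx0 mxE.
case: k k_in => [|k] // k_in; case: l l_in => [|l] // l_in.
have ltkn : (k < n)%N by lia.
have ltln : (l < n)%N by lia.
rewrite -[k]/(val (Ordinal ltkn)) -[l]/(val (Ordinal ltln)) !unitv_delta.
rewrite !map_delta_mx bform_delta /aext /=.
by rewrite (insubT (fun m => m < n)%N ltkn) (insubT (fun m => m < n)%N ltln).
Qed.

(* [dirv n 0] is -e_1 and [dirv n n] is e_n, since e_0 = e_(n+1) = 0. *)
Definition dirv n k : 'cV[int]_n := unitv n k - unitv n k.+1.

Lemma inF_dirv n d : inF d <-> exists2 k, (k <= n)%N & d = dirv n k.
Proof.
rewrite /dirv; split.
- case=> [->|[[i [i_pos [ltin ->]]]|->]].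
  + by exists 0%N; rewrite // (@unitv_out n 0) // sub0r.
  + by exists i; rewrite // ltnW.
  + by exists n; rewrite // (@unitv_out n n.+1) ?ltnSn ?orbT // subr0.
- case=> -[_ ->|k]; first by left; rewrite (@unitv_out n 0) // sub0r.
  rewrite leq_eqVlt => /orP[/eqP eq_kn ->|ltkn ->].
  + by right; right; rewrite (@unitv_out n k.+2) ?subr0 ?eq_kn //; lia.
  + by right; left; exists k.+1.
Qed.

Lemma dirv_entry n k (m : 'I_n) : dirv n k m 0 = (m.+1 == k)%:R - (m.+1 == k.+1)%:R.
Proof. by rewrite !mxE; case: eqP; case: eqP. Qed.

Lemma dirv_inj n i j : (j <= n)%N -> (i < j)%N -> dirv n i <> dirv n j.
Proof.
move=> lejn ltij eq_dirv.
have ltin : (i.-1 < n)%N by lia.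
have := congr1 (fun d : 'cV[int]_n => d (Ordinal ltin) 0) eq_dirv.
rewrite !dirv_entry /=.
by case: i ltij {eq_dirv ltin} => [|i] ltij /=; do !case: eqP => /=; lia.
Qed.

Lemma bform_dirv (R : realFieldType) n (A : 'M[R]_n) i j :
  bform A (map_mx intr (dirv n i)) (map_mx intr (dirv n j)) =
  aext A i j - aext A i j.+1 - aext A i.+1 j + aext A i.+1 j.+1.
Proof. by rewrite !map_mxB !(bformBl, bformBr) !bform_unitv; ring. Qed.

Theorem proposition2p2 (R : realFieldType) (n : nat) (A : 'M[R]_n)
    (hn : (0 < n)%N) (hA : A^T = A) :
  multimodular (quadform A) <->
  (forall i j : nat, (i < j)%N -> (j <= n)%N ->
     aext A i j - aext A i j.+1 - aext A i.+1 j + aext A i.+1 j.+1 <= 0).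
Proof.
split.
- move=> [_ mm] i j ltij lejn; rewrite -bform_dirv.
  apply/(quadform_mixed_difference_le0 hA 0)/mm => //.
  + by apply/inF_dirv; exists i; rewrite // ltnW // (leq_trans ltij).
  + by apply/inF_dirv; exists j.
  + exact: dirv_inj.
- move=> second_diff_le0; split; first by exists 0.
  move=> z _ _ _ /inF_dirv[i lein ->] /inF_dirv[j lejn ->] neq_dirv.
  apply/quadform_mixed_difference_le0 => //.
  case: (ltngtP i j) => [ltij|ltji|eqij]; last by rewrite eqij in neq_dirv.
  + by rewrite bform_dirv second_diff_le0.
  + by rewrite bformC // bform_dirv second_diff_le0.
Qed.
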